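(* Let $X$ and $Y$ be real Banach spaces. Then $(Lip_0(X,Y),Lip(\cdot))$ is isometrically isomorphic to $L(F_Y(X),Y)$, via the map $T\mapsto T\circ\delta_X^Y$.
   Context: $Lip_0(X,Y)$ is the Banach space of Lipschitz maps $f:X\to Y$ with $f(0)=0$ and norm $Lip(f)=\sup_{x\neq y}\|f(x)-f(y)\|/\|x-y\|$. For $x\in X$, $\delta_x^Y\in L(Lip_0(X,Y),Y)$ is evaluation $\delta_x^Y(f)=f(x)$, and $\delta_X^Y:X\to L(Lip_0(X,Y),Y)$ is the map $x\mapsto\delta_x^Y$. $F_Y(X)$ is the norm-closed linear span of $\{\delta_x^Y:x\in X\}$ in $L(Lip_0(X,Y),Y)$ with operator norm; $L(F_Y(X),Y)$ carries the operator norm. *)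

From HB Require Import structures.
From mathcomp Require Import all_boot all_order all_algebra.
From mathcomp Require Import all_classical all_reals all_analysis.
Set Implicit Arguments. Unset Strict Implicit. Unset Printing Implicit Defensive.
Import Order.TTheory GRing.Theory Num.Theory.
Import numFieldNormedType.Exports.
Local Open Scope classical_set_scope.
Local Open Scope ring_scope.

Section LipFree.
Context {R : realType} {X Y : normedModType R}.

(* Lipschitz constant Lip(f) = sup_{x<>y} |f x - f y| / |x - y|, as an
   extended real (+oo iff f is not Lipschitz).  0 is adjoined to the set
   (harmless, all ratios are >= 0) so that Lip(f) = 0, not -oo, when X = {0}. *)
Definition lipE (f : X -> Y) : \bar R :=
  ereal_sup ([set 0%E] `|`
    [set r | exists x y : X, x != y /\ r = (`|f x - f y| / `|x - y|)%:E]).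

Definition Lip0 : set (X -> Y) :=
  [set f | f 0 = 0 /\ (lipE f < +oo)%E].

(* Elements of L(Lip_0(X,Y), Y) are represented by functions
   Phi : (X -> Y) -> Y, only their values on Lip0 being relevant. *)
Definition lin_on_Lip0 (Phi : (X -> Y) -> Y) : Prop :=
  forall (a : R) (f g : X -> Y), Lip0 f -> Lip0 g ->
    Phi (fun x => a *: f x + g x) = a *: Phi f + Phi g.

Definition opnormE (Phi : (X -> Y) -> Y) : \bar R :=
  ereal_sup [set r | exists f, Lip0 f /\ (lipE f <= 1)%E /\ r = (`|Phi f|)%:E].

Definition LLip (Phi : (X -> Y) -> Y) : Prop :=
  lin_on_Lip0 Phi /\ (opnormE Phi < +oo)%E.

Definition delta (x : X) : (X -> Y) -> Y := fun f => f x.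

Definition FY : set ((X -> Y) -> Y) :=
  [set Phi | LLip Phi /\
    forall eps : R, 0 < eps -> exists (n : nat) (a : 'I_n -> R) (xs : 'I_n -> X),
      (opnormE (fun f => (Phi f - \sum_(i < n) a i *: delta (xs i) f)%R) < eps%:E)%E].

Definition opnormFE (T : ((X -> Y) -> Y) -> Y) : \bar R :=
  ereal_sup [set r | exists Phi, FY Phi /\ (opnormE Phi <= 1)%E /\ r = (`|T Phi|)%:E].

Definition LFY (T : ((X -> Y) -> Y) -> Y) : Prop :=
  (forall (a : R) (Phi Psi : (X -> Y) -> Y), FY Phi -> FY Psi ->
     T (fun f => a *: Phi f + Psi f) = a *: T Phi + T Psi)
  /\ (opnormFE T < +oo)%E.

End LipFree.

From HB Require Import structures.
From mathcomp Require Import all_boot all_order all_algebra.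
From mathcomp Require Import all_classical all_reals all_analysis.
Import Order.TTheory GRing.Theory Num.Theory.
Import numFieldNormedType.Exports.
Local Open Scope classical_set_scope.
Local Open Scope ring_scope.

(* Write g := T o delta for T in L(F_Y(X),Y).  Testing T on the normalised
   differences (delta_x - delta_y) / |x - y|, which have norm at most 1, gives
   Lip(g) <= |T|.  Conversely, T Phi = Phi(g) for every Phi in F_Y(X): both
   sides agree on the span of the deltas and both are continuous in Phi, since
   |T Phi| <= |T| |Phi| and |Phi(g)| <= |Phi| Lip(g).  This identity yields
   |T| <= Lip(g) and injectivity, and for f in Lip_0(X,Y) the evaluation
   Phi |-> Phi(f) is a preimage of f. *)

Section RealBounds.
Context {R : realType}.

Lemma lty_pos_ubound (e : \bar R) :
  (e < +oo)%E -> exists2 c : R, 0 < c & (e <= c%:E)%E.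
Proof.
case: e => [r| |] // _; last by exists 1; rewrite ?leNye.
exists (`|r| + 1); first by rewrite ltr_wpDl.
by rewrite lee_fin (le_trans (ler_norm r)) // lerDl.
Qed.

Lemma lee_pos_ubounds (x y : \bar R) : (0 <= y)%E ->
  (forall M : R, 0 < M -> (y <= M%:E)%E -> (x <= M%:E)%E) -> (x <= y)%E.
Proof.
case: y => [r| |] // r0 xM; last exact: leey.
have r0' : 0 <= r by rewrite -lee_fin.
apply/lee_addgt0Pr => e e0; rewrite -EFinD; apply: xM.
  exact: ltr_wpDl.
by rewrite lee_fin lerDl ltW.
Qed.

Lemma normr_le_pmul_eq0 {V : normedZmodType R} {z : V} {K : R} : 0 <= K ->
  (forall c, 0 < c -> `|z| <= K * c) -> z = 0.
Proof.
move=> K0 zK; apply/eqP; rewrite -normr_le0; apply/ler_addgt0Pr => e e0.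
have K1 : 0 < K + 1 by rewrite ltr_wpDl.
rewrite add0r (le_trans (zK (e / (K + 1)) _)) ?divr_gt0 //.
by rewrite mulrA ler_pdivrMr // [K * e]mulrC ler_pM2l // lerDl.
Qed.

End RealBounds.

Section LipschitzFree.
Context {R : realType} {X Y : normedModType R}.
Implicit Types (f h : X -> Y) (Phi Psi : (X -> Y) -> Y).
Implicit Types (T : ((X -> Y) -> Y) -> Y).

Definition lipschitz_by (c : R) (h : X -> Y) :=
  forall x y, `|h x - h y| <= c * `|x - y|.

Lemma lipE_ge0 h : (0 <= lipE h)%E.
Proof. by apply: ereal_sup_ubound; left. Qed.

Lemma lipE_leP h c : (lipE h <= c%:E)%E <-> 0 <= c /\ lipschitz_by c h.
Proof.
split=> [hc|[c0 hc]].
  split; first by rewrite -lee_fin (le_trans (lipE_ge0 h)).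
  move=> x y; have [->|nxy] := eqVneq x y.
    by rewrite !subrr !normr0 mulr0.
  rewrite -ler_pdivrMr ?normr_gt0 ?subr_eq0 // -lee_fin (le_trans _ hc) //.
  by apply: ereal_sup_ubound; right; exists x, y.
apply: ge_ereal_sup => r [->|[x [y [nxy ->]]]]; rewrite lee_fin //.
by rewrite ler_pdivrMr ?normr_gt0 ?subr_eq0.
Qed.

Lemma lipschitz_byZ a c h :
  lipschitz_by c h -> lipschitz_by (`|a| * c) (fun x => a *: h x).
Proof. by move=> hc x y; rewrite -scalerBr normrZ -mulrA ler_wpM2l. Qed.

Lemma Lip0_lipschitz {c h} : 0 <= c -> lipschitz_by c h -> h 0 = 0 -> Lip0 h.
Proof.
by move=> c0 hc h0; split => //; apply: le_lt_trans (ltry c); apply/lipE_leP.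
Qed.

Lemma Lip0_zero : Lip0 (fun _ : X => 0 : Y).
Proof.
have z0 : lipschitz_by 0 (fun _ : X => 0 : Y).
  by move=> x y; rewrite subrr normr0 mul0r.
exact: Lip0_lipschitz (lexx 0) z0 _.
Qed.

Definition opnorm_le (Phi : (X -> Y) -> Y) (c : R) :=
  forall f, Lip0 f -> (lipE f <= 1)%E -> `|Phi f| <= c.

Lemma opnormE_leP Phi c : (opnormE Phi <= c%:E)%E <-> opnorm_le Phi c.
Proof.
split=> [Phic f Lf f1|Phic].
  by rewrite -lee_fin (le_trans _ Phic) //; apply: ereal_sup_ubound; exists f.
by apply: ge_ereal_sup => r [f [Lf [f1 ->]]]; rewrite lee_fin Phic.
Qed.

Lemma opnorm_le_comb a Phi Psi c d : opnorm_le Phi c -> opnorm_le Psi d ->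
  opnorm_le (fun f => a *: Phi f + Psi f) (`|a| * c + d).
Proof.
move=> Phic Psid f Lf f1; rewrite (le_trans (ler_normD _ _)) // normrZ.
by rewrite lerD ?Psid // ler_wpM2l ?Phic.
Qed.

Lemma lin_on_Lip0_zero Phi : lin_on_Lip0 Phi -> Phi (fun _ => 0) = 0.
Proof.
move=> linPhi; have := linPhi (-1) _ _ Lip0_zero Lip0_zero.
by rewrite !scaleN1r oppr0 addr0 addNr.
Qed.

Lemma lin_on_Lip0Z Phi a h :
  lin_on_Lip0 Phi -> Lip0 h -> Phi (fun x => a *: h x) = a *: Phi h.
Proof.
move=> linPhi Lh; have := linPhi a _ _ Lh Lip0_zero.
rewrite lin_on_Lip0_zero // addr0 => <-.
by congr Phi; apply: funext => x; rewrite addr0.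
Qed.

Lemma lin_on_Lip0_le {Phi d h c} : lin_on_Lip0 Phi -> opnorm_le Phi d ->
  Lip0 h -> lipschitz_by c h -> 0 < c -> `|Phi h| <= d * c.
Proof.
move=> linPhi Phid Lh hc c0.
have ci0 : 0 <= c^-1 by rewrite invr_ge0 ltW.
have h1 : lipschitz_by 1 (fun x => c^-1 *: h x).
  by have := lipschitz_byZ c^-1 _ _ hc; rewrite ger0_norm // mulVf ?gt_eqF.
have Lh1 : Lip0 (fun x => c^-1 *: h x).
  by apply: Lip0_lipschitz ler01 h1 _; rewrite /= Lh.1 scaler0.
have := Phid _ Lh1 (proj2 (lipE_leP _ _) (conj ler01 h1)).
by rewrite lin_on_Lip0Z // normrZ ger0_norm // ler_pdivrMl // mulrC.
Qed.

Definition delta_comb {n} (a : 'I_n -> R) (xs : 'I_n -> X) : (X -> Y) -> Y :=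
  fun f => \sum_(i < n) a i *: delta (xs i) f.

Definition approx_by_deltas Phi := forall eps : R, 0 < eps ->
  exists n (a : 'I_n -> R) (xs : 'I_n -> X),
    (opnormE (fun f => (Phi f - delta_comb a xs f)%R) < eps%:E)%E.

Lemma delta_comb_comb c {n1} (a1 : 'I_n1 -> R) (xs1 : 'I_n1 -> X)
    {n2} (a2 : 'I_n2 -> R) (xs2 : 'I_n2 -> X) :
  exists n (a : 'I_n -> R) (xs : 'I_n -> X),
  forall f, delta_comb a xs f =
            c *: delta_comb a1 xs1 f + delta_comb a2 xs2 f.
Proof.
exists (n1 + n2)%N,
  (fun i => match fintype.split i with inl j => c * a1 j | inr k => a2 k end),
  (fun i => match fintype.split i with inl j => xs1 j | inr k => xs2 k end).
move=> f; rewrite /delta_comb big_split_ord scaler_sumr /=.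
by congr (_ + _); apply: eq_bigr => i _;
  rewrite ?(unsplitK (inl _ i)) ?(unsplitK (inr _ i)) ?scalerA.
Qed.

Lemma LLip_comb a Phi Psi :
  LLip Phi -> LLip Psi -> LLip (fun f => a *: Phi f + Psi f).
Proof.
move=> [linPhi Phioo] [linPsi Psioo]; split.
  move=> b f g Lf Lg; rewrite linPhi // linPsi //.
  by rewrite !scalerDr !scalerA [b * a]mulrC addrACA.
have [c _ /opnormE_leP Phic] := lty_pos_ubound _ Phioo.
have [d _ /opnormE_leP Psid] := lty_pos_ubound _ Psioo.
apply: le_lt_trans (ltry (`|a| * c + d)).
exact/opnormE_leP/opnorm_le_comb.
Qed.

Lemma approx_by_deltas_comb a Phi Psi : approx_by_deltas Phi ->
  approx_by_deltas Psi -> approx_by_deltas (fun f => a *: Phi f + Psi f).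
Proof.
move=> apPhi apPsi eps eps0.
have a1_gt0 : 0 < `|a| + 1 by rewrite ltr_wpDl.
have e2_gt0 : 0 < eps / 2 by rewrite divr_gt0.
have [e1 e1_gt0] : exists2 e1, 0 < e1 & `|a| * e1 < eps / 2.
  exists (eps / 2 / (`|a| + 1)); first by rewrite !divr_gt0.
  by rewrite mulrA ltr_pdivrMr // mulrC ltr_pM2l ?divr_gt0 // ltrDl.
have [n1 [b1 [xs1 /ltW /opnormE_leP D1]]] := apPhi _ e1_gt0.
have [n2 [b2 [xs2 /ltW /opnormE_leP D2]]] := apPsi _ e2_gt0.
have [n [b [xs Sb]]] := delta_comb_comb a b1 xs1 b2 xs2.
exists n, b, xs; apply: le_lt_trans (_ : (`|a| * e1 + eps / 2)%:E < eps%:E)%E.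
  apply/opnormE_leP => f Lf f1; rewrite Sb opprD addrACA -scalerBr.
  exact: opnorm_le_comb D1 D2 f Lf f1.
by rewrite lte_fin [X in _ < X]splitr ltrD2r.
Qed.

Lemma FY_comb a Phi Psi : FY Phi -> FY Psi -> FY (fun f => a *: Phi f + Psi f).
Proof.
move=> [LPhi apPhi] [LPsi apPsi].
by split; [exact: LLip_comb | exact: approx_by_deltas_comb].
Qed.

Lemma delta_comb0 (a : 'I_0 -> R) (xs : 'I_0 -> X) :
  delta_comb a xs = fun _ : X -> Y => 0.
Proof. by apply: funext => f; rewrite /delta_comb big_ord0. Qed.

Lemma delta_combS n (a : 'I_n.+1 -> R) (xs : 'I_n.+1 -> X) :
  delta_comb a xs = fun f : X -> Y => a ord0 *: delta (xs ord0) f +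
    delta_comb (fun i => a (lift ord0 i)) (fun i => xs (lift ord0 i)) f.
Proof. by apply: funext => f; rewrite /delta_comb big_ord_recl. Qed.

Lemma approx_by_deltas_delta_comb {n} (a : 'I_n -> R) (xs : 'I_n -> X) :
  approx_by_deltas (delta_comb a xs : (X -> Y) -> Y).
Proof.
move=> eps eps0; exists n, a, xs; apply: le_lt_trans (_ : 0%:E < eps%:E)%E.
  by apply/opnormE_leP => f _ _; rewrite subrr normr0.
by rewrite lte_fin.
Qed.

Lemma FY_zero : FY (fun _ : X -> Y => 0).
Proof.
split; last first.
  change (approx_by_deltas (fun _ : X -> Y => 0)).
  rewrite -(delta_comb0 (fun _ => 0) (fun _ => 0)).
  exact: approx_by_deltas_delta_comb.
split; first by move=> a f g _ _; rewrite scaler0 addr0.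
apply: le_lt_trans (ltry 0).
by apply/opnormE_leP => f _ _; rewrite normr0.
Qed.

Lemma FY_delta x : FY (delta x : (X -> Y) -> Y).
Proof.
split; last first.
  change (approx_by_deltas (delta x : (X -> Y) -> Y)).
  have -> : (delta x : (X -> Y) -> Y) =
      delta_comb (fun _ : 'I_1 => 1) (fun _ => x).
    by apply: funext => f; rewrite /delta_comb big_ord1 scale1r.
  exact: approx_by_deltas_delta_comb.
split=> //; apply: le_lt_trans (ltry `|x|).
apply/opnormE_leP => f [f0 _] /lipE_leP[_ f1].
by have := f1 x 0; rewrite f0 !subr0 mul1r.
Qed.

Lemma FYZ a Phi : FY Phi -> FY (fun f => a *: Phi f).
Proof.
move=> FPhi; have -> : (fun f => a *: Phi f) = (fun f => a *: Phi f + 0).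
  by apply: funext => f; rewrite addr0.
exact: FY_comb FPhi FY_zero.
Qed.

Lemma FY_sub {Phi Psi} : FY Phi -> FY Psi -> FY (fun f => Phi f - Psi f).
Proof.
move=> FPhi FPsi.
have -> : (fun f => Phi f - Psi f) = (fun f => -1 *: Psi f + Phi f).
  by apply: funext => f; rewrite scaleN1r addrC.
exact: FY_comb.
Qed.

Lemma FY_delta_comb {n} (a : 'I_n -> R) (xs : 'I_n -> X) :
  FY (delta_comb a xs : (X -> Y) -> Y).
Proof.
elim: n a xs => [|n IH] a xs; first by rewrite delta_comb0; exact: FY_zero.
by rewrite delta_combS; apply: FY_comb (FY_delta _) (IH _ _).
Qed.

Lemma opnormFE_leP T c : (opnormFE T <= c%:E)%E <->
  forall Phi, FY Phi -> (opnormE Phi <= 1)%E -> `|T Phi| <= c.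
Proof.
split=> [Tc Phi FPhi Phi1|Tc].
  by rewrite -lee_fin (le_trans _ Tc) //; apply: ereal_sup_ubound; exists Phi.
by apply: ge_ereal_sup => r [Phi [FPhi [Phi1 ->]]]; rewrite lee_fin Tc.
Qed.

Section BoundedOperator.
Context {T : ((X -> Y) -> Y) -> Y} (HT : LFY T).

Lemma LFY_zero : T (fun _ => 0) = 0.
Proof.
have := HT.1 (-1) _ _ FY_zero FY_zero.
by rewrite !scaleN1r oppr0 addr0 addNr.
Qed.

Lemma LFYZ a Phi : FY Phi -> T (fun f => a *: Phi f) = a *: T Phi.
Proof.
move=> FPhi; have -> : (fun f => a *: Phi f) = (fun f => a *: Phi f + 0).
  by apply: funext => f; rewrite addr0.
by rewrite HT.1 ?LFY_zero ?addr0 //; exact: FY_zero.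
Qed.

Lemma LFY_sub Phi Psi : FY Phi -> FY Psi ->
  T (fun f => Phi f - Psi f) = T Phi - T Psi.
Proof.
move=> FPhi FPsi.
have -> : (fun f => Phi f - Psi f) = (fun f => -1 *: Psi f + Phi f).
  by apply: funext => f; rewrite scaleN1r addrC.
by rewrite HT.1 // scaleN1r addrC.
Qed.

Lemma opnormFE_ge0 : (0 <= opnormFE T)%E.
Proof.
apply: ereal_sup_ubound; exists (fun _ => 0); split; first exact: FY_zero.
split; last by rewrite LFY_zero normr0.
by apply/opnormE_leP => f _ _; rewrite normr0.
Qed.

Lemma LFY_le {M Psi c} : (opnormFE T <= M%:E)%E -> FY Psi ->
  opnorm_le Psi c -> 0 < c -> `|T Psi| <= M * c.
Proof.
move=> /opnormFE_leP TM FPsi Psic c0.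
have ci0 : 0 <= c^-1 by rewrite invr_ge0 ltW.
have := TM _ (FYZ c^-1 _ FPsi); rewrite LFYZ // normrZ ger0_norm //.
rewrite ler_pdivrMl // mulrC; apply; apply/opnormE_leP => f Lf f1.
by rewrite normrZ ger0_norm // ler_pdivrMl // mulr1 Psic.
Qed.

Lemma LFY_delta_comb {n} (a : 'I_n -> R) (xs : 'I_n -> X) :
  T (delta_comb a xs) = delta_comb a xs (fun x => T (delta x)).
Proof.
elim: n a xs => [|n IH] a xs; first by rewrite delta_comb0 LFY_zero.
by rewrite delta_combS HT.1 ?IH //; [exact: FY_delta | exact: FY_delta_comb].
Qed.

Lemma lipschitz_comp_delta M :
  (opnormFE T <= M%:E)%E -> lipschitz_by M (fun x => T (delta x)).
Proof.
move=> TM x y; have [->|nxy] := eqVneq x y.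
  by rewrite !subrr !normr0 mulr0.
rewrite -(LFY_sub _ _ (FY_delta x) (FY_delta y)).
apply: LFY_le TM (FY_sub (FY_delta x) (FY_delta y)) _ _.
  by move=> f Lf /lipE_leP[_ f1]; rewrite -[`|x - y|]mul1r f1.
by rewrite normr_gt0 subr_eq0.
Qed.

Lemma Lip0_comp_delta : Lip0 (fun x => T (delta x)).
Proof.
have [M M0 TM] := lty_pos_ubound _ HT.2.
apply: Lip0_lipschitz (ltW M0) (lipschitz_comp_delta _ TM) _.
apply: (normr_le_pmul_eq0 (ltW M0)) => c c0.
have delta0c : opnorm_le (delta 0 : (X -> Y) -> Y) c.
  by move=> f [f0 _] _; rewrite /delta f0 normr0 ltW.
exact: LFY_le TM (FY_delta 0) delta0c c0.
Qed.

Lemma LFY_eval Phi : FY Phi -> T Phi = Phi (fun x => T (delta x)).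
Proof.
move=> FPhi; set g := fun x => T (delta x).
have [M M0 TM] := lty_pos_ubound _ HT.2.
apply/subr0_eq/(normr_le_pmul_eq0 (K := M + M)).
  by rewrite addr_ge0 // ltW.
move=> c c0; have [n [a [xs /ltW /opnormE_leP PhiS]]] := FPhi.2 c c0.
have FS := FY_delta_comb a xs.
have -> : T Phi - Phi g =
    T (fun f => Phi f - delta_comb a xs f) - (Phi g - delta_comb a xs g).
  by rewrite LFY_sub // LFY_delta_comb opprB addrA subrK.
rewrite mulrDl (le_trans (ler_normB _ _)) // lerD //.
  exact: LFY_le TM (FY_sub FPhi FS) PhiS c0.
rewrite mulrC; exact: (lin_on_Lip0_le (FY_sub FPhi FS).1.1 PhiS
  Lip0_comp_delta (lipschitz_comp_delta _ TM) M0).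
Qed.

Lemma lipE_comp_delta : lipE (fun x => T (delta x)) = opnormFE T.
Proof.
apply/le_anti/andP; split; apply: lee_pos_ubounds.
- exact: opnormFE_ge0.
- move=> M M0 TM; apply/lipE_leP.
  by split; [exact: ltW | exact: lipschitz_comp_delta].
- exact: lipE_ge0.
- move=> M M0 /lipE_leP[_ gM]; apply/opnormFE_leP => Phi FPhi /opnormE_leP Phi1.
  rewrite LFY_eval // -[M]mul1r.
  exact: lin_on_Lip0_le FPhi.1.1 Phi1 Lip0_comp_delta gM M0.
Qed.

End BoundedOperator.

Lemma LFY_eval_at f : Lip0 f -> LFY (fun Phi => Phi f).
Proof.
move=> Lf; split=> //.
have [c c0 /lipE_leP[_ fc]] := lty_pos_ubound _ Lf.2.
apply: le_lt_trans (ltry c); apply/opnormFE_leP => Phi FPhi /opnormE_leP Phi1.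
by rewrite -[c]mul1r; exact: lin_on_Lip0_le FPhi.1.1 Phi1 Lf fc c0.
Qed.

End LipschitzFree.

Theorem mainTheorem9 (R : realType) (X Y : completeNormedModType R) :
  (* maps into Lip_0 and is isometric *)
  (forall T : ((X -> Y) -> Y) -> Y, LFY T ->
     Lip0 (fun x : X => T (delta x)) /\ lipE (fun x : X => T (delta x)) = opnormFE T)
  /\
  (* surjective *)
  (forall f : X -> Y, Lip0 f ->
     exists T : ((X -> Y) -> Y) -> Y, LFY T /\ forall x : X, T (delta x) = f x)
  /\
  (* injective (as operators on F_Y(X)) *)
  (forall T1 T2 : ((X -> Y) -> Y) -> Y, LFY T1 -> LFY T2 ->
     (forall x : X, T1 (delta x) = T2 (delta x)) ->
     forall Phi, FY Phi -> T1 Phi = T2 Phi).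
Proof.
split; [|split].
- by move=> T HT; split; [exact: Lip0_comp_delta HT | exact: lipE_comp_delta HT].
- by move=> f Lf; exists (fun Phi => Phi f); split; [exact: LFY_eval_at |].
- move=> T1 T2 HT1 HT2 T12 Phi FPhi.
  by rewrite (LFY_eval HT1) // (LFY_eval HT2) //; congr Phi; apply: funext.
Qed.
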